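(* Let $\beta\in(0,2]$ and, on the open subset $U\subset H^3$ where the geodesic polar coordinates $(r,\theta,\phi)$ with $r>0$, $\theta\in(0,\pi)$ are valid (so $g_{H^3}=\mathrm{d}r^2+\sinh^2 r(\mathrm{d}\theta^2+\sin^2\theta\,\mathrm{d}\phi^2)$), define $$\mathcal{A}=\frac{\mathbf{i}}{2}\cos\theta\,\mathrm{d}\phi+\frac{2(\beta-1)\,\mathrm{e}^{2r}\sinh r}{\mathrm{e}^{4r}-(\beta-1)^2}\left(\mathbf{j}\sin\theta\,\mathrm{d}\phi-\mathbf{k}\,\mathrm{d}\theta\right),$$ $$\Phi=\frac{\mathbf{i}}{4}(1-\coth r)\,\frac{(\beta-1)^2(1-3\mathrm{e}^{2r})-\mathrm{e}^{6r}(1-3\mathrm{e}^{-2r})}{\mathrm{e}^{4r}-(\beta-1)^2}.$$ Then $(\Phi,\mathcal{A})$ satisfies the Bogomolny equations $\mathrm{d}_{\mathcal{A}}\Phi=-\ast_{H^3}\mathcal{F}$ on $U$, where $\mathcal{F}$ is the curvature of $\mathcal{A}$. Moreover $\|\Phi\|\to\tfrac12$ as $r\to\infty$.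
   Context: $\mathfrak{su}(2)$ is identified with the imaginary quaternions spanned by $\mathbf{i},\mathbf{j},\mathbf{k}$, with inner product $\langle X,Y\rangle=-\tfrac12\mathrm{Tr}(XY)$ (so $\|\mathbf{i}\|=1$). $\mathrm{d}_{\mathcal{A}}\Phi=\mathrm{d}\Phi+[\mathcal{A},\Phi]$ with $[X,Y]=XY-YX$, and $\mathcal{F}=\mathrm{d}\mathcal{A}+\mathcal{A}\wedge\mathcal{A}$. $\ast_{H^3}$ is the Hodge star of $g_{H^3}$ with orientation given by $\sinh^2 r\sin\theta\,\mathrm{d}r\wedge\mathrm{d}\theta\wedge\mathrm{d}\phi$. *)

From Stdlib Require Import Reals.
From Coquelicot Require Import Coquelicot.
Open Scope R_scope.

Record quat := Quat { q0 : R; q1 : R; q2 : R; q3 : R }.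

(* Hamilton product: i*j = k, j*k = i, k*i = j, i^2=j^2=k^2=-1 *)
Definition qmul (p q : quat) : quat :=
  Quat (q0 p * q0 q - q1 p * q1 q - q2 p * q2 q - q3 p * q3 q)
       (q0 p * q1 q + q1 p * q0 q + q2 p * q3 q - q3 p * q2 q)
       (q0 p * q2 q - q1 p * q3 q + q2 p * q0 q + q3 p * q1 q)
       (q0 p * q3 q + q1 p * q2 q - q2 p * q1 q + q3 p * q0 q).

Definition qsub (p q : quat) : quat :=
  Quat (q0 p - q0 q) (q1 p - q1 q) (q2 p - q2 q) (q3 p - q3 q).

(* An element of su(2): x1 i + x2 j + x3 k *)
Record su2 := Su2 { x1 : R; x2 : R; x3 : R }.

Definition toq (X : su2) : quat := Quat 0 (x1 X) (x2 X) (x3 X).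
Definition imq (p : quat) : su2 := Su2 (q1 p) (q2 p) (q3 p).

Definition su2_i : su2 := Su2 1 0 0.
Definition su2_j : su2 := Su2 0 1 0.
Definition su2_k : su2 := Su2 0 0 1.

Definition su2_add (X Y : su2) : su2 := Su2 (x1 X + x1 Y) (x2 X + x2 Y) (x3 X + x3 Y).
Definition su2_scal (a : R) (X : su2) : su2 := Su2 (a * x1 X) (a * x2 X) (a * x3 X).
Definition su2_opp (X : su2) : su2 := su2_scal (-1) X.
Definition su2_zero : su2 := Su2 0 0 0.

Definition brk (X Y : su2) : su2 := imq (qsub (qmul (toq X) (toq Y)) (qmul (toq Y) (toq X))).

(* <X,Y> = -1/2 Tr(XY); for the standard 2x2 complex representation of
   quaternions, Tr(q) = 2 * (real part of q), so <X,Y> = - Re(XY). *)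
Definition su2_inner (X Y : su2) : R := - q0 (qmul (toq X) (toq Y)).
Definition su2_norm (X : su2) : R := sqrt (su2_inner X X).

Inductive coord := Cr | Cth | Cph.

Definition inU (r th ph : R) : Prop := 0 < r /\ 0 < th < PI.

Definition fn := R -> R -> R -> su2.
(* su(2)-valued 1-forms: coefficient of d(x^c) *)
Definition form1 := coord -> fn.
(* su(2)-valued 2-forms: F a b is the coefficient of dx^a /\ dx^b (antisymmetric) *)
Definition form2 := coord -> coord -> fn.

Definition pd1 (g : R -> R -> R -> R) (c : coord) (r th ph : R) : R :=
  match c with
  | Cr => Derive (fun t => g t th ph) r
  | Cth => Derive (fun t => g r t ph) th
  | Cph => Derive (fun t => g r th t) ph
  end.

Definition pd (f : fn) (c : coord) : fn := fun r th ph =>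
  Su2 (pd1 (fun a b d => x1 (f a b d)) c r th ph)
      (pd1 (fun a b d => x2 (f a b d)) c r th ph)
      (pd1 (fun a b d => x3 (f a b d)) c r th ph).

Definition covD (A : form1) (Phi : fn) : form1 := fun c r th ph =>
  su2_add (pd Phi c r th ph) (brk (A c r th ph) (Phi r th ph)).

(* F = dA + A /\ A :  F_ab = d_a A_b - d_b A_a + [A_a, A_b] *)
Definition curv (A : form1) : form2 := fun a b r th ph =>
  su2_add (su2_add (pd (A b) a r th ph) (su2_opp (pd (A a) b r th ph)))
          (brk (A a r th ph) (A b r th ph)).

Definition gH3 (c : coord) (r th ph : R) : R :=
  match c with
  | Cr => 1
  | Cth => (sinh r) ^ 2
  | Cph => (sinh r) ^ 2 * (sin th) ^ 2
  end.

(* Hodge star of a diagonal metric on 2-forms, orientation dr/\dth/\dph: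
   ( *F )_c = sqrt(g_r g_th g_ph) / (g_a g_b) * F_ab  for (a,b,c) cyclic. *)
Definition cyc_pred (c : coord) : coord * coord :=
  match c with
  | Cr => (Cth, Cph)
  | Cth => (Cph, Cr)
  | Cph => (Cr, Cth)
  end.

Definition hodgeH3 (F : form2) : form1 := fun c r th ph =>
  let ab := cyc_pred c in
  su2_scal (sqrt (gH3 Cr r th ph * gH3 Cth r th ph * gH3 Cph r th ph)
            / (gH3 (fst ab) r th ph * gH3 (snd ab) r th ph))
           (F (fst ab) (snd ab) r th ph).

Definition bogomolny (Phi : fn) (A : form1) : Prop :=
  forall r th ph, inU r th ph ->
    forall c, covD A Phi c r th ph = su2_opp (hodgeH3 (curv A) c r th ph).

Definition coth (r : R) : R := cosh r / sinh r.

Definition Kfun (beta r : R) : R :=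
  2 * (beta - 1) * exp (2 * r) * sinh r / (exp (4 * r) - (beta - 1) ^ 2).

Definition Aconn (beta : R) : form1 := fun c r th ph =>
  match c with
  | Cr => su2_zero
  | Cth => su2_scal (- Kfun beta r) su2_k
  | Cph => su2_add (su2_scal (/ 2 * cos th) su2_i) (su2_scal (Kfun beta r * sin th) su2_j)
  end.

Definition Phifun (beta : R) : fn := fun r th ph =>
  su2_scal (/ 4 * (1 - coth r) *
            (((beta - 1) ^ 2 * (1 - 3 * exp (2 * r)) - exp (6 * r) * (1 - 3 * exp (- 2 * r)))
             / (exp (4 * r) - (beta - 1) ^ 2)))
           su2_i.

From Stdlib Require Import Reals Lra.
From Coquelicot Require Import Coquelicot.
Open Scope R_scope.

(* For the spherically symmetric ansatz A = (i/2) cos th dph + K(r) (j sin th dph - k dth),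
   Phi = f(r) i, the Bogomolny equations reduce to the ODE system
     K' = -2 K f,   f' = (1/2 - 2 K^2) / sinh^2 r,
   and the given K and f satisfy it: in the variable e^r both identities are rational.
   In the variable u = e^(-2r), f is a rational function regular at u = 0 with value 1/2,
   so ||Phi|| = |f| tends to 1/2 as r -> oo. *)

Lemma pd_ext (f g : fn) (c : coord) (r th ph : R) :
  (forall r th ph, f r th ph = g r th ph) -> pd f c r th ph = pd g c r th ph.
Proof.
intros Efg; destruct c; unfold pd, pd1;
  f_equal; apply Derive_ext; intros; rewrite Efg; reflexivity.
Qed.

Lemma bogomolny_ext (Phi Phi' : fn) (A A' : form1) :
  (forall r th ph, Phi' r th ph = Phi r th ph) ->
  (forall c r th ph, A' c r th ph = A c r th ph) ->
  bogomolny Phi A -> bogomolny Phi' A'.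
Proof.
intros EPhi EA HB r th ph HU c.
assert (Ecurv : forall a b, curv A' a b r th ph = curv A a b r th ph).
{ intros a b; unfold curv; rewrite !EA, !(pd_ext (A' _) (A _)) by apply EA.
  reflexivity. }
unfold covD; rewrite EPhi, EA, (pd_ext Phi' Phi) by apply EPhi.
unfold hodgeH3; rewrite Ecurv; apply (HB r th ph HU c).
Qed.

Definition ansatz_connection (K : R -> R) : form1 := fun c r th ph =>
  match c with
  | Cr => Su2 0 0 0
  | Cth => Su2 0 0 (- K r)
  | Cph => Su2 (/ 2 * cos th) (K r * sin th) 0
  end.

Definition ansatz_higgs (f : R -> R) : fn := fun r _ _ => Su2 (f r) 0 0.

Lemma bogomolny_ansatz (K f : R -> R) :
  (forall r, 0 < r -> is_derive K r (-2 * K r * f r)) ->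
  (forall r, 0 < r -> is_derive f r ((/ 2 - 2 * K r ^ 2) / sinh r ^ 2)) ->
  bogomolny (ansatz_higgs f) (ansatz_connection K).
Proof.
intros dK df r th ph [Hr Hth] c.
assert (Hs : 0 < sinh r) by (rewrite <- sinh_0; apply sinh_lt; exact Hr).
assert (Ht : 0 < sin th) by (apply sin_gt_0; lra).
assert (Hvol : sqrt (1 * (sinh r * (sinh r * 1)) * (sinh r * (sinh r * 1) * (sin th * (sin th * 1))))
               = sinh r ^ 2 * sin th).
{ rewrite <- (sqrt_square (sinh r ^ 2 * sin th)) by nra. f_equal; ring. }
destruct c; unfold covD, hodgeH3, curv, pd, pd1, brk; cbn -[Derive sqrt sinh sin cos]; rewrite Hvol.
all: try change (Derive (fun t => f t) r) with (Derive f r).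
all: rewrite ?Derive_const, ?Derive_opp, ?Derive_scal, ?Derive_scal_l,
  ?(is_derive_unique _ _ _ (is_derive_sin _)), ?(is_derive_unique _ _ _ (is_derive_cos _)),
  ?(is_derive_unique _ _ _ (dK r Hr)), ?(is_derive_unique _ _ _ (df r Hr)).
all: unfold ansatz_higgs, su2_add, su2_opp, su2_scal, imq, qsub, qmul, toq; cbn -[sinh sin cos].
all: f_equal; field; lra.
Qed.

Lemma exp_mul_pow (k : R) (n : nat) (r : R) : k = INR n -> exp (k * r) = exp r ^ n.
Proof.
intros ->; induction n as [|n IH]; cbn [pow].
- rewrite Rmult_0_l; apply exp_0.
- rewrite S_INR, Rmult_plus_distr_r, Rmult_1_l, exp_plus, IH; ring.
Qed.

Lemma exp_mul_inv_pow (k : R) (n : nat) (r : R) : k = - INR n -> exp (k * r) = / exp r ^ n.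
Proof.
intros ->; rewrite <- (exp_mul_pow (INR n) n r) by reflexivity.
rewrite <- exp_Ropp; f_equal; ring.
Qed.

Ltac exp_to_powers r :=
  rewrite ?(exp_mul_pow 2 2 r), ?(exp_mul_pow 4 4 r), ?(exp_mul_pow 6 6 r),
    ?(exp_mul_inv_pow (-2) 2 r), ?(exp_Ropp r) by (simpl; lra).

Lemma exp_bounds_of_pos (r : R) : 0 < r -> 1 < exp r /\ 1 < exp r ^ 4 /\ / exp r < 1.
Proof.
intros Hr.
assert (HX : 1 < exp r) by (rewrite <- exp_0; apply exp_increasing, Hr).
split; [exact HX | split].
- exact (Rlt_pow_R1 _ 4 HX (Nat.lt_0_succ 3)).
- rewrite <- Rinv_1; apply Rinv_lt_contravar; lra.
Qed.

Definition higgs_coef (beta r : R) : R :=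
  / 4 * (1 - coth r) *
  (((beta - 1) ^ 2 * (1 - 3 * exp (2 * r)) - exp (6 * r) * (1 - 3 * exp (- 2 * r)))
   / (exp (4 * r) - (beta - 1) ^ 2)).

Lemma Kfun_derive (beta r : R) : (beta - 1) ^ 2 <= 1 -> 0 < r ->
  is_derive (Kfun beta) r (-2 * Kfun beta r * higgs_coef beta r).
Proof.
intros Hb Hr; destruct (exp_bounds_of_pos r Hr) as (HX & HX4 & _).
unfold Kfun, sinh; auto_derive.
- exp_to_powers r; lra.
- unfold higgs_coef, coth, sinh, cosh; exp_to_powers r.
  field; repeat split; nra.
Qed.

Lemma higgs_coef_derive (beta r : R) : (beta - 1) ^ 2 <= 1 -> 0 < r ->
  is_derive (higgs_coef beta) r ((/ 2 - 2 * Kfun beta r ^ 2) / sinh r ^ 2).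
Proof.
intros Hb Hr; destruct (exp_bounds_of_pos r Hr) as (HX & HX4 & Hinv).
unfold higgs_coef, coth, sinh, cosh; auto_derive.
- exp_to_powers r; repeat split; nra.
- unfold Kfun, sinh; exp_to_powers r.
  field; repeat split; nra.
Qed.

Definition higgs_profile (beta u : R) : R :=
  (1 - 3 * u + 3 * (beta - 1) ^ 2 * u ^ 2 - (beta - 1) ^ 2 * u ^ 3)
  / (2 * (1 - u) * (1 - (beta - 1) ^ 2 * u ^ 2)).

Lemma higgs_coef_profile (beta r : R) : (beta - 1) ^ 2 <= 1 -> 0 < r ->
  higgs_coef beta r = higgs_profile beta (exp (-2 * r)).
Proof.
intros Hb Hr; destruct (exp_bounds_of_pos r Hr) as (HX & HX4 & Hinv).
unfold higgs_coef, higgs_profile, coth, sinh, cosh; exp_to_powers r.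
field; repeat split; nra.
Qed.

Lemma is_lim_exp_mul_neg (a : R) : a < 0 -> is_lim (fun r => exp (a * r)) p_infty 0.
Proof.
intros Ha.
apply (is_lim_comp exp (fun r => a * r) p_infty 0 m_infty).
- exact is_lim_exp_m.
- replace m_infty with (Rbar_mult a p_infty).
  + apply is_lim_scal_l, is_lim_id.
  + cbn; destruct (Rle_dec 0 a); [exfalso; lra | reflexivity].
- red; exists 0; intros r _; discriminate.
Qed.

Lemma is_lim_higgs_coef (beta : R) : (beta - 1) ^ 2 <= 1 ->
  is_lim (higgs_coef beta) p_infty (/ 2).
Proof.
intros Hb.
apply is_lim_ext_loc with (f := fun r => higgs_profile beta (exp (-2 * r))).
{ red; exists 0; intros r Hr; symmetry; apply higgs_coef_profile; assumption. }
assert (Hcont : continuity_pt (higgs_profile beta) 0).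
{ apply continuity_pt_filterlim, (ex_derive_continuous (K := R_AbsRing) (V := R_NormedModule)).
  unfold higgs_profile; auto_derive; intros E; ring_simplify in E; lra. }
replace (/ 2) with (higgs_profile beta 0) by (unfold higgs_profile; field).
apply (is_lim_comp _ _ p_infty _ 0).
- apply is_lim_continuity, Hcont.
- apply is_lim_exp_mul_neg; lra.
- red; exists 0; intros r _ E; apply Rbar_finite_eq in E; pose proof (exp_pos (-2 * r)); lra.
Qed.

Lemma su2_norm_scal_i (a : R) : su2_norm (su2_scal a su2_i) = Rabs a.
Proof.
unfold su2_norm, su2_inner, su2_scal, su2_i, toq, qmul; cbn.
rewrite <- sqrt_Rsqr_abs; f_equal; unfold Rsqr; ring.
Qed.

Lemma Phifun_ansatz (beta r th ph : R) :
  Phifun beta r th ph = ansatz_higgs (higgs_coef beta) r th ph.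
Proof. unfold Phifun, ansatz_higgs, su2_scal, su2_i, higgs_coef; cbn [x1 x2 x3]; f_equal; ring. Qed.

Lemma Aconn_ansatz (beta : R) (c : coord) (r th ph : R) :
  Aconn beta c r th ph = ansatz_connection (Kfun beta) c r th ph.
Proof.
destruct c; unfold Aconn, ansatz_connection, su2_add, su2_scal, su2_zero, su2_i, su2_j, su2_k;
  cbn; f_equal; ring.
Qed.

Theorem mainTheorem2 (beta : R) (hbeta : 0 < beta <= 2) :
  bogomolny (Phifun beta) (Aconn beta) /\
  (forall th ph : R,
     is_lim (fun r => su2_norm (Phifun beta r th ph)) p_infty (/ 2)).
Proof.
assert (Hb : (beta - 1) ^ 2 <= 1) by nra.
split.
- apply (bogomolny_ext _ _ _ _ (Phifun_ansatz beta) (Aconn_ansatz beta)).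
  apply bogomolny_ansatz; intros r Hr.
  + apply Kfun_derive; assumption.
  + apply higgs_coef_derive; assumption.
- intros th ph.
  apply is_lim_ext with (f := fun r => Rabs (higgs_coef beta r)).
  { intros r; symmetry; apply su2_norm_scal_i. }
  replace (Finite (/ 2)) with (Rbar_abs (/ 2)) by (cbn; f_equal; apply Rabs_right; lra).
  apply is_lim_Rabs, is_lim_higgs_coef, Hb.
Qed.
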